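(* Let $\mathbf{H}$ be a Heyting algebra with canonical frame $(X,\perp,Y,T)$. Then the lattice $\mathcal G(X)$ of stable sets of filters is a complete Heyting algebra and a canonical extension of $\mathbf H$, with $\mathbf H$ identified (via $a\mapsto X_a=\{x\in X:a\in x\}$) with the subalgebra $\mathrm{KO}\mathcal G(X)$ of compact-open stable sets. Its implication, the residual of intersection, is given by $A\Rightarrow C=\{u\in X:\forall z\in X\,(z\in A\text{ and }u\le z\text{ imply }z\in C)\}$, and this coincides with $A\Rightarrow_T C=\{u\in X:\forall x\in X\,\forall y\in Y\,(x\in A\text{ and }C\perp y\text{ imply }uT'xy)\}$.
   Context: The canonical frame of $\mathbf H$: $X$ is the set of filters of $\mathbf H$, $Y$ the set of ideals, $x\perp y$ iff $x\cap y\neq\emptyset$; for $x\in X,v\in Y$, $x\leadsto v$ is the ideal generated by $\{a\to b:a\in x,b\in v\}$, and $yTxv$ iff $x\leadsto v\subseteq y$. For $U\subseteq X$, $U'=\{y:\forall x\in U\ x\perp y\}$; for $V\subseteq Y$, ${}'V=\{x:\forall y\in V\ x\perp y\}$; $A\subseteq X$ is stable if $A={}'(A')$; $\mathcal G(X)$ is the complete lattice of stable sets (meet is intersection, join is closure of union). $u\le z$ on $X$ iff $\{u\}'\subseteq\{z\}'$ (i.e. $u\subseteq z$ as filters). $C\perp y$ means $c\perp y$ for all $c\in C$. $uT'xy$ iff $\forall v\in Y(vTxy\Rightarrow u\perp v)$. $X$ carries the topology generated by the basis $\{X_a:a\in H\}$; $\mathrm{KO}\mathcal G(X)$ is the set of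 stable sets compact and open in this topology. Canonical extension is in the sense of Gehrke–Harding. *)

From Stdlib Require Import List.
From mathcomp Require Import all_boot all_order.
Set Implicit Arguments. Unset Strict Implicit. Unset Printing Implicit Defensive.
Import Order.LTheory.
Local Open Scope order_scope.

Definition heyting_imp {d : Order.disp_t} {H : tbLatticeType d}
  (imp : H -> H -> H) : Prop :=
  forall a b c : H, (c <= imp a b) = (c `&` a <= b).

Section Frame.
Context {d : Order.disp_t} {H : tbLatticeType d} (imp : H -> H -> H).

(* filters (improper filter H included) and ideals (improper ideal included) *)
Definition is_filter (F : H -> Prop) : Prop :=
  (exists a, F a) /\ (forall a b, F a -> a <= b -> F b) /\
  (forall a b, F a -> F b -> F (a `&` b)).
Definition is_ideal (I : H -> Prop) : Prop :=
  (exists a, I a) /\ (forall a b, I b -> a <= b -> I a) /\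
  (forall a b, I a -> I b -> I (a `|` b)).

Record filt := Filt { fcar :> H -> Prop; fprop : is_filter fcar }.
Record idl := Idl { icar :> H -> Prop; iprop : is_ideal icar }.

(* X = filt, Y = idl *)
Definition perp (x : filt) (y : idl) : Prop := exists a, x a /\ y a.

Definition primeX (U : filt -> Prop) : idl -> Prop :=
  fun y => forall x, U x -> perp x y.
Definition primeY (V : idl -> Prop) : filt -> Prop :=
  fun x => forall y, V y -> perp x y.
Definition gclos (A : filt -> Prop) : filt -> Prop := primeY (primeX A).

Definition seteq {T} (A B : T -> Prop) : Prop := forall t, A t <-> B t.
Definition subs {T} (A B : T -> Prop) : Prop := forall t, A t -> B t.

Definition stable (A : filt -> Prop) : Prop := seteq A (gclos A).

Definition bigjoinG (Fam : (filt -> Prop) -> Prop) : filt -> Prop :=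
  gclos (fun x => exists A, Fam A /\ A x).
Definition bigmeetG (Fam : (filt -> Prop) -> Prop) : filt -> Prop :=
  fun x => forall A, Fam A -> A x.
Definition joinG (A B : filt -> Prop) : filt -> Prop :=
  gclos (fun x => A x \/ B x).

Definition Xa (a : H) : filt -> Prop := fun x => x a.

Definition leX (u z : filt) : Prop := forall y, perp u y -> perp z y.

Definition ideal_gen (S : H -> Prop) : H -> Prop :=
  fun c => forall I, is_ideal I -> subs S I -> I c.

Definition leadsto (x : filt) (v : idl) : H -> Prop :=
  ideal_gen (fun c => exists a b, x a /\ v b /\ c = imp a b).

Definition Trel (y : idl) (x : filt) (v : idl) : Prop := subs (leadsto x v) y.

Definition Tprime (u : filt) (x : filt) (y : idl) : Prop :=
  forall v, Trel v x y -> perp u v.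

Definition ImpG (A C : filt -> Prop) : filt -> Prop :=
  fun u => forall z, A z -> leX u z -> C z.

Definition ImpT (A C : filt -> Prop) : filt -> Prop :=
  fun u => forall x y, A x -> (forall c, C c -> perp c y) -> Tprime u x y.

Definition openX (U : filt -> Prop) : Prop :=
  forall x, U x -> exists a, x a /\ subs (Xa a) U.
Definition compactX (A : filt -> Prop) : Prop :=
  forall (I : Type) (U : I -> filt -> Prop), (forall i, openX (U i)) ->
    (forall x, A x -> exists i, U i x) ->
    exists s : seq I, forall x, A x -> exists2 i, List.In i s & U i x.
Definition KO (A : filt -> Prop) : Prop := stable A /\ compactX A /\ openX A.

(* Gehrke--Harding canonical extension conditions for e = Xa into G(X) *)
Definition dense_ext : Prop :=
  forall A, stable A ->
    (exists Fam : (H -> Prop) -> Prop,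
       seteq A (bigjoinG (fun B => exists S, Fam S /\
                                  seteq B (bigmeetG (fun D => exists a, S a /\ D = Xa a)))))
    /\
    (exists Fam : (H -> Prop) -> Prop,
       seteq A (bigmeetG (fun B => exists S, Fam S /\
                                  seteq B (bigjoinG (fun D => exists a, S a /\ D = Xa a))))).

Definition compact_ext : Prop :=
  forall S T : H -> Prop,
    subs (bigmeetG (fun D => exists a, S a /\ D = Xa a))
         (bigjoinG (fun D => exists a, T a /\ D = Xa a)) ->
    exists (s t : seq H), (forall a, List.In a s -> S a) /\
                          (forall a, List.In a t -> T a) /\
                          \meet_(a <- s) a <= \join_(b <- t) b.

End Frame.

From mathcomp Require Import all_boot all_order.
Set Implicit Arguments. Unset Strict Implicit. Unset Printing Implicit Defensive.
Import Order.LTheory.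
Local Open Scope order_scope.

(** Stable sets of filters are up-closed for inclusion, and [X_a] is the
    stable set cut out by the principal ideal of [a].  The Heyting structure
    rests on one observation: if [w] lies in [A => C], [z] in [A] and
    [C] is orthogonal to the ideal [y], then the filter join [w \/ z] lies in
    [A], hence in [C]; so [p /\ q] is in [y] for some [p] in [w], [q] in [z],
    and [p <= q -> (p /\ q)] puts [p] in the ideal [z ~> y].  Thus [A => C]
    meets every [z ~> y], which by modus ponens inside [z] gives both the
    stability of [A => C] and its agreement with [A =>_T C].  The principal
    filter of [a] makes [X_a] compact, and a compact-open stable set is a
    finite union of basic opens, i.e. [X_a] for a finite join [a].  For
    compactness of the extension, the filter generated by [S] lies in the
    join of the [X_b], [b] in [T], so it meets the ideal generated by [T]. *)

Section FiltersIdeals.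
Context {d : Order.disp_t} {H : tbLatticeType d}.
Notation X := (@filt d H).
Notation Y := (@idl d H).

Lemma filter_upclosed (x : X) a b : x a -> a <= b -> x b.
Proof. by case: x => fx /= [_ [up _]]; apply: up. Qed.

Lemma filter_meet (x : X) a b : x a -> x b -> x (a `&` b).
Proof. by case: x => fx /= [_ [_ meet]]; apply: meet. Qed.

Lemma filter_top (x : X) : x \top.
Proof. by case: x => fx /= [[a xa] [up _]]; apply: up xa (lex1 a). Qed.

Lemma ideal_downclosed (y : Y) a b : y b -> a <= b -> y a.
Proof. by case: y => fy /= [_ [down _]]; apply: down. Qed.

Lemma ideal_join (y : Y) a b : y a -> y b -> y (a `|` b).
Proof. by case: y => fy /= [_ [_ join]]; apply: join. Qed.

Lemma ideal_bot (y : Y) : y \bot.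
Proof. by case: y => fy /= [[a ya] [down _]]; apply: down ya (le0x a). Qed.

Lemma join_sup_In (T : Type) (f : T -> H) (s : seq T) i :
  List.In i s -> f i <= \join_(j <- s) f j.
Proof.
elim: s => //= j s IHs [<-|si]; rewrite big_cons; first exact: leUl.
exact: le_trans (IHs si) (leUr _ _).
Qed.

Lemma ideal_bigjoin (y : Y) (T : Type) (f : T -> H) (s : seq T) :
  (forall i, List.In i s -> y (f i)) -> y (\join_(j <- s) f j).
Proof.
elim: s => [|j s IHs] ys; first by rewrite big_nil; apply: ideal_bot.
rewrite big_cons; apply: ideal_join; first by apply: ys; left.
by apply: IHs => i si; apply: ys; right.
Qed.

Lemma principal_filter_subproof a : is_filter (fun c : H => a <= c).
Proof.
split; first by exists a.
split; first by move=> b c ab bc; apply: le_trans bc.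
by move=> b c ab ac; rewrite lexI ab ac.
Qed.
Definition principal_filter a : X := Filt (principal_filter_subproof a).

Lemma principal_ideal_subproof a : is_ideal (fun c : H => c <= a).
Proof.
split; first by exists a.
split; first by move=> b c ca bc; apply: le_trans ca.
by move=> b c ba ca; rewrite leUx ba ca.
Qed.
Definition principal_ideal a : Y := Idl (principal_ideal_subproof a).

Lemma filter_join_subproof (w z : X) :
  is_filter (fun c => exists p q, w p /\ z q /\ p `&` q <= c).
Proof.
split.
  exists \top, \top, \top.
  by split; [apply: filter_top | split; [apply: filter_top | apply: leIl]].
split.
  by move=> b c [p [q [wp [zq pqb]]]] bc; exists p, q; do 2!split => //; apply: le_trans bc.
move=> b c [p [q [wp [zq pqb]]]] [p' [q' [wp' [zq' pqc]]]].
exists (p `&` p'), (q `&` q'); split; first exact: filter_meet.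
split; first exact: filter_meet.
rewrite lexI; apply/andP; split.
  by apply: le_trans pqb; apply: leI2; apply: leIl.
by apply: le_trans pqc; apply: leI2; apply: leIr.
Qed.
Definition filter_join w z : X := Filt (filter_join_subproof w z).

Lemma filter_join_l (w z : X) a : w a -> filter_join w z a.
Proof. by move=> wa; exists a, \top; split => //; split; [apply: filter_top | apply: leIl]. Qed.

Lemma filter_join_r (w z : X) a : z a -> filter_join w z a.
Proof. by move=> za; exists \top, a; split; [apply: filter_top | split => //; apply: leIr]. Qed.

Lemma finmeet_filter_subproof (S : H -> Prop) :
  is_filter (fun c => exists s : seq H,
    (forall a, List.In a s -> S a) /\ \meet_(a <- s) a <= c).
Proof.
split; first by exists \top, [::]; split => //; apply: lex1.
split; first by move=> b c [s [sS sb]] bc; exists s; split => //; apply: le_trans bc.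
move=> b c [s [sS sb]] [t [tS tc]]; exists (s ++ t); split.
  by move=> a sta; case: (List.in_app_or _ _ _ sta) => [/sS|/tS].
by rewrite big_cat; apply: leI2.
Qed.
Definition finmeet_filter S : X := Filt (finmeet_filter_subproof S).

Lemma finjoin_ideal_subproof (T : H -> Prop) :
  is_ideal (fun c => exists t : seq H,
    (forall a, List.In a t -> T a) /\ c <= \join_(a <- t) a).
Proof.
split; first by exists \bot, [::]; split => //; apply: le0x.
split; first by move=> b c [t [tT ct]] bc; exists t; split => //; apply: le_trans ct.
move=> b c [s [sT bs]] [t [tT ct]]; exists (s ++ t); split.
  by move=> a sta; case: (List.in_app_or _ _ _ sta) => [/sT|/tT].
by rewrite big_cat; apply: leU2.
Qed.
Definition finjoin_ideal T : Y := Idl (finjoin_ideal_subproof T).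

Lemma finmeet_filter1 (S : H -> Prop) a : S a -> finmeet_filter S a.
Proof. by move=> Sa; exists [:: a]; rewrite big_seq1; split => // b [<-|[]]. Qed.

Lemma finjoin_ideal1 (T : H -> Prop) a : T a -> finjoin_ideal T a.
Proof. by move=> Ta; exists [:: a]; rewrite big_seq1; split => // b [<-|[]]. Qed.

End FiltersIdeals.

Section StableSets.
Context {d : Order.disp_t} {H : tbLatticeType d}.
Notation X := (@filt d H).
Notation Y := (@idl d H).

Lemma subs_gclos (A : X -> Prop) : subs A (gclos A).
Proof. by move=> x Ax y Ay; apply: Ay. Qed.

Lemma gclos_mono (A B : X -> Prop) : subs A B -> subs (gclos A) (gclos B).
Proof. by move=> AB x Ax y By; apply: Ax => z Az; apply/By/AB. Qed.

Lemma stable_gclos_subs (A : X -> Prop) : subs (gclos A) A -> stable A.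
Proof. by move=> clA x; split; [apply: subs_gclos | apply: clA]. Qed.

Lemma stable_gclos (A : X -> Prop) : stable (gclos A).
Proof. by apply: stable_gclos_subs => x Ax y Ay; apply: Ax => z; apply. Qed.

Lemma gclos_min (A B : X -> Prop) : subs A B -> stable B -> subs (gclos A) B.
Proof. by move=> AB stB x /(gclos_mono AB) /stB. Qed.

Lemma stable_perp (y : Y) : stable (fun x => perp x y).
Proof. by apply: stable_gclos_subs => x; apply. Qed.

Lemma stable_upclosed (A : X -> Prop) (x z : X) :
  stable A -> A x -> subs x z -> A z.
Proof.
move=> stA Ax xz; apply/stA => y Ay.
by have [a [xa ya]] := Ay x Ax; exists a; split; first apply: xz.
Qed.

Lemma leXP (u z : X) : leX u z <-> subs u z.
Proof.
split=> [uz a ua | uz y [a [ua ya]]]; last by exists a; split; first apply: uz.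
have [c [zc ca]] := uz (principal_ideal a) (ex_intro _ a (conj ua (le_refl a))).
exact: filter_upclosed zc ca.
Qed.

Lemma stable_Xa (a : H) : stable (Xa a).
Proof.
apply: stable_gclos_subs => x Ax.
have [c [xc ca]] := Ax (principal_ideal a) (fun z za => ex_intro _ a (conj za (le_refl a))).
exact: filter_upclosed xc ca.
Qed.

Lemma open_Xa (a : H) : openX (Xa a).
Proof. by move=> x xa; exists a; split => // z. Qed.

Lemma compact_Xa (a : H) : compactX (Xa a).
Proof.
move=> J U openU cover.
have [i Ui] := cover (principal_filter a) (le_refl a).
have [b [ab bU]] := openU i _ Ui.
by exists [:: i] => x xa; exists i; [left | apply/bU/(filter_upclosed xa)].
Qed.

Lemma KO_Xa (a : H) : KO (Xa a).
Proof. by split; [apply: stable_Xa | split; [apply: compact_Xa | apply: open_Xa]]. Qed.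

(* Cover [A] by the basic opens it contains; a finite subcover [X_(a_i)]
   gives [A = X_(\join a_i)], the reverse inclusion by stability of [A]. *)
Lemma KO_Xa_eq (A : X -> Prop) : KO A -> exists a : H, seteq A (Xa a).
Proof.
move=> [stA [cpA opA]].
pose J := {a : H | subs (Xa a) A}.
have cover x : A x -> exists i : J, Xa (sval i) x.
  by move=> /opA [a [xa aA]]; exists (exist _ a aA).
have [s sA] := cpA J (fun i => Xa (sval i)) (fun i => @open_Xa (sval i)) cover.
exists (\join_(i <- s) sval i) => x; split.
  by move=> /sA [i si xi]; apply: filter_upclosed xi (join_sup_In _ si).
move=> xs; apply/stA => y Ay; exists (\join_(i <- s) sval i); split => //.
apply: ideal_bigjoin => i _.
have [c [ic yc]] := Ay _ (proj2_sig i (principal_filter (sval i)) (le_refl _)).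
exact: ideal_downclosed yc ic.
Qed.

Lemma Xa_leP (a b : H) : subs (Xa a) (Xa b) <-> a <= b.
Proof.
split=> [ab | ab x xa]; last exact: filter_upclosed xa ab.
exact: ab (principal_filter a) (le_refl a).
Qed.

Lemma Xa_meet (a b : H) : seteq (Xa (a `&` b)) (fun x => Xa a x /\ Xa b x).
Proof.
move=> x; split=> [xab | [xa xb]]; last exact: filter_meet.
by split; apply: filter_upclosed xab _; [apply: leIl | apply: leIr].
Qed.

Lemma Xa_join (a b : H) : seteq (Xa (a `|` b)) (joinG (Xa a) (Xa b)).
Proof.
move=> x; split=> [xab y Ay | ].
  exists (a `|` b); split => //; apply: ideal_join.
    have [c [ac yc]] := Ay (principal_filter a) (or_introl (le_refl a)).
    exact: ideal_downclosed yc ac.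
  have [c [bc yc]] := Ay (principal_filter b) (or_intror (le_refl b)).
  exact: ideal_downclosed yc bc.
have XaXb_sub : subs (fun z => Xa a z \/ Xa b z) (Xa (a `|` b)).
  move=> z [za|zb]; first exact: filter_upclosed za (leUl _ _).
  exact: filter_upclosed zb (leUr _ _).
exact: (gclos_min XaXb_sub (stable_Xa _)).
Qed.

Lemma Xa_top : seteq (Xa (\top : H)) (fun _ => True).
Proof. by move=> x; split => // _; apply: filter_top. Qed.

Lemma Xa_bot : seteq (Xa (\bot : H)) (gclos (fun _ => False)).
Proof.
move=> x; split=> [x0 y _ | ]; first by exists \bot; split => //; apply: ideal_bot.
exact: (gclos_min (fun _ => False_ind _) (stable_Xa _)).
Qed.

Lemma stable_bigmeetG (Fam : (X -> Prop) -> Prop) :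
  (forall A, Fam A -> stable A) -> stable (bigmeetG Fam).
Proof.
move=> stFam; apply: stable_gclos_subs => x clx A FA.
by apply/(stFam A FA); apply: gclos_mono clx => z; apply.
Qed.

Lemma bigjoinG_ub (Fam : (X -> Prop) -> Prop) A :
  Fam A -> subs A (bigjoinG Fam).
Proof. by move=> FA x Ax; apply: subs_gclos; exists A. Qed.

Lemma bigjoinG_lub (Fam : (X -> Prop) -> Prop) B :
  stable B -> (forall A, Fam A -> subs A B) -> subs (bigjoinG Fam) B.
Proof. by move=> stB FamB; apply: gclos_min stB => x [A [FA Ax]]; apply: FamB FA _ Ax. Qed.

(* Every stable set is the join of the closed elements [/\ X_a, a in x] over
   its points [x], and the meet of the open elements [\/ X_a, a in y] over
   the ideals [y] of [A']. *)
Lemma Xa_dense : @dense_ext d H.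
Proof.
move=> A stA; split.
  exists (fun S => exists x : X, A x /\ S = fcar x) => x; split.
    move=> Ax; apply: (bigjoinG_ub (A := bigmeetG (fun D => exists a, x a /\ D = Xa a))).
      by exists (fcar x); split => //; exists x.
    by move=> D [a [xa ->]].
  move: x; apply: (bigjoinG_lub stA) => B [S [[z [Az ->]] eqB]] w /eqB Bw.
  by apply: (stable_upclosed stA Az) => a za; apply: (Bw (Xa a)); exists a.
exists (fun S => exists y : Y, primeX A y /\ S = icar y) => x; split.
  move=> Ax B [S [[y [Ay ->]] eqB]]; apply/eqB; apply: subs_gclos.
  by have [c [xc yc]] := Ay x Ax; exists (Xa c); split => //; exists c.
move=> Bx; apply/stA => y Ay; apply: (Bx (fun z => perp z y)).
exists (icar y); split; first by exists y.
move=> z; split=> [[c [zc yc]] | ].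
  by apply: subs_gclos; exists (Xa c); split => //; exists c.
by apply: gclos_min (stable_perp y) z => w [D [[a [ya ->]] wa]]; exists a.
Qed.

Lemma Xa_compact : @compact_ext d H.
Proof.
move=> S T ST.
have : bigjoinG (fun D => exists a, T a /\ D = Xa a) (finmeet_filter S).
  by apply: ST => D [a [Sa ->]]; apply: finmeet_filter1.
move=> /(_ (finjoin_ideal T)) [].
  by move=> z [D [[b [Tb ->]] zb]]; exists b; split => //; apply: finjoin_ideal1.
move=> c [[s [sS sc]] [t [tT ct]]].
by exists s, t; do 2!split => //; apply: le_trans ct.
Qed.

End StableSets.

Section HeytingFrame.
Context {d : Order.disp_t} {H : tbLatticeType d} (imp : H -> H -> H).
Hypothesis himp : heyting_imp imp.
Notation X := (@filt d H).
Notation Y := (@idl d H).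

Lemma imp_mp a b : imp a b `&` a <= b.
Proof. by rewrite -himp. Qed.

Lemma imp_le_meetl_joinr a1 a2 b1 b2 : imp a1 b1 <= imp (a1 `&` a2) (b1 `|` b2).
Proof.
rewrite himp; apply: le_trans (leUl b1 b2); apply: le_trans (imp_mp a1 b1).
by apply: leI2 => //; apply: leIl.
Qed.

Lemma leadsto_ideal_subproof (x : X) (y : Y) :
  is_ideal (fun c => exists a b, x a /\ y b /\ c <= imp a b).
Proof.
split.
  exists (imp \top \bot), \top, \bot.
  by split; [apply: filter_top | split; [apply: ideal_bot |]].
split.
  by move=> c e [a [b [xa [yb eab]]]] ce; exists a, b; do 2!split => //; apply: le_trans eab.
move=> c e [a1 [b1 [xa1 [yb1 c1]]]] [a2 [b2 [xa2 [yb2 e2]]]].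
exists (a1 `&` a2), (b1 `|` b2); split; first exact: filter_meet.
split; first exact: ideal_join.
rewrite leUx (le_trans c1 (imp_le_meetl_joinr _ _ _ _)) /=.
by rewrite meetC joinC (le_trans e2 (imp_le_meetl_joinr _ _ _ _)).
Qed.
Definition leadsto_ideal x y : Y := Idl (leadsto_ideal_subproof x y).

Lemma leadstoE (x : X) (y : Y) c : leadsto imp x y c <-> leadsto_ideal x y c.
Proof.
split=> [gen | [a [b [xa [yb cab]]]] J [_ [down _]] genJ].
  apply: (gen (leadsto_ideal x y)); first exact: iprop.
  by move=> e [a [b [xa [yb ->]]]]; exists a, b.
by apply: down cab; apply: genJ; exists a, b.
Qed.

Lemma leadsto_perp (z : X) (y : Y) p : z p -> leadsto_ideal z y p -> perp z y.
Proof.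
move=> zp [a [b [za [yb pab]]]]; exists b; split => //.
by apply: filter_upclosed (filter_meet zp za) _; rewrite -himp.
Qed.

Lemma ImpG_perp_leadsto (A C : X -> Prop) (w z : X) (y : Y) :
  stable A -> ImpG A C w -> A z -> (forall c, C c -> perp c y) ->
  perp w (leadsto_ideal z y).
Proof.
move=> stA Cw Az Cy.
have Awz : A (filter_join w z) by apply: stable_upclosed stA Az _ => a; apply: filter_join_r.
have Cwz : C (filter_join w z) by apply: Cw Awz _; apply/leXP => a; apply: filter_join_l.
have [c [[p [q [wp [zq pqc]]]] yc]] := Cy _ Cwz.
by exists p; split => //; exists q, c; rewrite himp.
Qed.

Lemma stable_ImpG (A C : X -> Prop) : stable A -> stable C -> stable (ImpG A C).
Proof.
move=> stA stC; apply: stable_gclos_subs => u clu z Az /leXP uz; apply/stC => y Cy.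
have [p [up zyp]] := clu _ (fun w Cw => ImpG_perp_leadsto stA Cw Az Cy).
exact: leadsto_perp (uz _ up) zyp.
Qed.

Lemma ImpG_residual (A B C : X -> Prop) :
  stable B -> subs (fun x => B x /\ A x) C <-> subs B (ImpG A C).
Proof.
move=> stB; split=> [BAC u Bu z Az /leXP uz | BAC x [Bx Ax]].
  by apply: BAC; split; first apply: stable_upclosed stB Bu uz.
exact: (BAC x Bx x Ax (fun _ => id)).
Qed.

Lemma ImpG_ImpT (A C : X -> Prop) :
  stable A -> stable C -> seteq (ImpG A C) (ImpT imp A C).
Proof.
move=> stA stC u; split=> [Cu x y Ax Cy v Tv | Tu z Az /leXP uz].
  have [p [up zyp]] := ImpG_perp_leadsto stA Cu Ax Cy.
  by exists p; split => //; apply/Tv/leadstoE.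
apply/stC => y Cy.
have [p [up zyp]] := Tu z y Az Cy (leadsto_ideal z y) (fun c => proj1 (leadstoE z y c)).
exact: leadsto_perp (uz _ up) zyp.
Qed.

Lemma Xa_imp (a b : H) : seteq (Xa (imp a b)) (ImpG (Xa a) (Xa b)).
Proof.
move=> u; split=> [uab z za /leXP uz | abu].
  exact: filter_upclosed (filter_meet (uz _ uab) za) (imp_mp a b).
have [p [q [up [aq pqb]]]] : Xa b (filter_join u (principal_filter a)).
  apply: abu; first exact/filter_join_r/le_refl.
  by apply/leXP => c; apply: filter_join_l.
by apply: filter_upclosed up _; rewrite himp (le_trans _ pqb) ?leI2.
Qed.

End HeytingFrame.

Theorem corollary4p6 (d : Order.disp_t) (H : tbLatticeType d)
  (imp : H -> H -> H) (himp : heyting_imp imp) :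
  (* G(X) is a complete lattice: meets are intersections, joins closures of unions *)
  (forall Fam : (@filt d H -> Prop) -> Prop, (forall A, Fam A -> stable A) ->
     stable (bigmeetG Fam) /\ stable (bigjoinG Fam) /\
     (forall A, Fam A -> subs A (bigjoinG Fam)) /\
     (forall B, stable B -> (forall A, Fam A -> subs A B) -> subs (bigjoinG Fam) B)) /\
  (* it is a Heyting algebra: ImpG is the residual of intersection,
     and it coincides with ImpT *)
  (forall A C : @filt d H -> Prop, stable A -> stable C ->
     stable (ImpG A C) /\
     (forall B, stable B -> (subs (fun x => B x /\ A x) C <-> subs B (ImpG A C))) /\
     seteq (ImpG A C) (ImpT imp A C)) /\
  (* a |-> X_a is a Heyting-algebra isomorphism of H onto KO G(X) *)
  (forall a : H, KO (Xa a)) /\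
  (forall a b : H, subs (Xa a) (Xa b) <-> a <= b) /\
  (forall A : @filt d H -> Prop, KO A -> exists a : H, seteq A (Xa a)) /\
  (forall a b : H, seteq (Xa (a `&` b)) (fun x => Xa a x /\ Xa b x)) /\
  (forall a b : H, seteq (Xa (a `|` b)) (joinG (Xa a) (Xa b))) /\
  seteq (Xa (\top : H)) (fun _ => True) /\
  seteq (Xa (\bot : H)) (gclos (fun _ => False)) /\
  (forall a b : H, seteq (Xa (imp a b)) (ImpG (Xa a) (Xa b))) /\
  (* canonical extension (Gehrke--Harding): dense and compact *)
  @dense_ext d H /\ @compact_ext d H.
Proof.
split.
  move=> Fam stFam; split; first exact: stable_bigmeetG.
  by split; [apply: stable_gclos | split; [apply: bigjoinG_ub | apply: bigjoinG_lub]].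
split.
  move=> A C stA stC; split; first exact: stable_ImpG.
  by split; [move=> B; apply: ImpG_residual | apply: ImpG_ImpT].
split; first exact: KO_Xa.
split; first exact: Xa_leP.
split; first exact: KO_Xa_eq.
split; first exact: Xa_meet.
split; first exact: Xa_join.
split; first exact: Xa_top.
split; first exact: Xa_bot.
split; first exact: Xa_imp.
by split; [apply: Xa_dense | apply: Xa_compact].
Qed.
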